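(* Let $(X,\Gamma)$ be a $(\mu,\nu)$-path system space. For every $\delta\ge0$, $\varepsilon\ge0$, $\theta\ge0$ there exists $L\ge0$ with the following property. Let $Y_0,A_1,Y_1,\dots,A_n,Y_n\subseteq X$ be non-empty subsets forming a $(\delta,\varepsilon,L)$-buffering sequence. Then for every $i\in\{1,\dots,n\}$, $d_{A_i}(Y_0,Y_i)>\theta$.
   Context: A path is a rectifiable continuous map $\alpha\colon[a,b]\to X$ parametrised by arc length; it is a $(\kappa,\lambda)$-quasi-geodesic if $d(\alpha(t),\alpha(t'))\le|t-t'|\le\kappa d(\alpha(t),\alpha(t'))+\lambda$. A $(\mu,\nu)$-path system space $(X,\Gamma)$ is a geodesic metric space $X$ with a collection $\Gamma$ of paths closed under subpaths, such that any two points are joined by an element of $\Gamma$ and every element is a $(\mu,\nu)$-quasi-geodesic. A map $\pi_A\colon X\to A$ onto a subset $A$ is $\delta$-constricting if (CS1) $d(x,\pi_A(x))\le\delta$ for $x\in A$, and (CS2) for all $x,y\in X$ and $\gamma\in\Gamma$ joining $x$ to $y$, if $d(\pi_A(x),\pi_A(y))>\delta$ then $\gamma$ meets $B_X(\pi_A(x),\delta)$ and $B_X(\pi_A(y),\delta)$. Notation: $d_A(x,y)=d(\pi_A(x),\pi_A(y))$, $\operatorname{diam}_A(Y)=\operatorname{diam}(\pi_A(Y))$, $d_A(Y,Z)=d(\pi_A(Y),\pi_A(Z))$ (infimum of distances). A sequence $Y_0,A_1,Y_1,\dots,A_n,Y_n$ of non-empty subsets is $(\delta,\varepsilon,L)$-buffering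 if for each $i\in\{1,\dots,n\}$ there is a $\delta$-constricting map $\pi_{A_i}\colon X\to A_i$ such that: (BS1) if $i\ne n$, $\max\{\operatorname{diam}_{A_i}(A_{i+1}),\operatorname{diam}_{A_{i+1}}(A_i)\}\le\varepsilon$; (BS2) $\max\{\operatorname{diam}_{A_i}(Y_{i-1}),\operatorname{diam}_{A_i}(Y_i)\}\le\varepsilon$; (BS3) $\max\{d(A_i,Y_{i-1}),d(A_i,Y_i)\}\le\varepsilon$; (BS4) $d_{A_i}(Y_{i-1},Y_i)\ge L$. *)

From Stdlib Require Import Reals.
From Coquelicot Require Import Coquelicot.
Open Scope R_scope.

Section Defs.
Variable X : Type.
Variable d : X -> X -> R.

Definition is_metric : Prop :=
  (forall x y, 0 <= d x y) /\ (forall x y, d x y = 0 <-> x = y) /\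
  (forall x y, d x y = d y x) /\ (forall x y z, d x z <= d x y + d y z).

Definition is_geodesic_space : Prop :=
  is_metric /\
  forall x y, exists g : R -> X, g 0 = x /\ g (d x y) = y /\
    forall t t', 0 <= t <= d x y -> 0 <= t' <= d x y -> d (g t) (g t') = Rabs (t - t').

(* a path: a map on the compact interval [pa, pb] (values outside are irrelevant) *)
Record path := Path { pa : R; pb : R; pab : pa <= pb; pf : R -> X }.

Fixpoint psum (f : R -> X) (p : nat -> R) (n : nat) : R :=
  match n with
  | O => 0
  | S k => psum f p k + d (f (p k)) (f (p (S k)))
  end.

Definition is_partition (s t : R) (p : nat -> R) (n : nat) : Prop :=
  p O = s /\ p n = t /\ forall i, (i < n)%nat -> p i <= p (S i).

Definition length_is (f : R -> X) (s t l : R) : Prop :=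
  is_lub (fun r => exists p n, is_partition s t p n /\ r = psum f p n) l.

(* rectifiable path parametrised by arc length: the length of every subpath
   [s,t] equals t - s (this implies rectifiability and 1-Lipschitz continuity) *)
Definition arclength_param (g : path) : Prop :=
  forall s t, pa g <= s -> s <= t -> t <= pb g -> length_is (pf g) s t (t - s).

Definition is_path (g : path) : Prop :=
  arclength_param g /\
  forall t0, pa g <= t0 <= pb g ->
    forall e, 0 < e -> exists dl, 0 < dl /\ forall t, pa g <= t <= pb g ->
      Rabs (t - t0) < dl -> d (pf g t) (pf g t0) < e.

Definition quasi_geodesic (k l : R) (g : path) : Prop :=
  forall t t', pa g <= t <= pb g -> pa g <= t' <= pb g ->
    d (pf g t) (pf g t') <= Rabs (t - t') /\
    Rabs (t - t') <= k * d (pf g t) (pf g t') + l.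

Definition joins (g : path) (x y : X) : Prop := pf g (pa g) = x /\ pf g (pb g) = y.

Definition meets_ball (g : path) (p : X) (r : R) : Prop :=
  exists t, pa g <= t <= pb g /\ d (pf g t) p <= r.

Definition path_system_space (Gamma : path -> Prop) (mu nu : R) : Prop :=
  is_geodesic_space /\
  (forall g, Gamma g -> is_path g) /\
  (* closed under subpaths (allowing a translation of the parameter interval) *)
  (forall g, Gamma g -> forall s t, pa g <= s -> s <= t -> t <= pb g ->
     exists g' c, Gamma g' /\ pa g' = s + c /\ pb g' = t + c /\
       forall u, s <= u <= t -> pf g' (u + c) = pf g u) /\
  (forall x y, exists g, Gamma g /\ joins g x y) /\
  (forall g, Gamma g -> quasi_geodesic mu nu g).

Definition constricting (Gamma : path -> Prop) (A : X -> Prop) (pi : X -> X)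
    (delta : R) : Prop :=
  (forall x, A (pi x)) /\
  (forall x, A x -> d x (pi x) <= delta) /\
  (forall x y g, Gamma g -> joins g x y -> d (pi x) (pi y) > delta ->
     meets_ball g (pi x) delta /\ meets_ball g (pi y) delta).

Definition diam_proj (pi : X -> X) (Y : X -> Prop) : Rbar :=
  Lub_Rbar (fun r => exists y y', Y y /\ Y y' /\ r = d (pi y) (pi y')).

Definition set_dist (P Q : X -> Prop) : Rbar :=
  Glb_Rbar (fun r => exists x y, P x /\ Q y /\ r = d x y).

Definition dproj (pi : X -> X) (Y Z : X -> Prop) : Rbar :=
  set_dist (fun x => exists y, Y y /\ x = pi y) (fun x => exists z, Z z /\ x = pi z).

Definition nonempty (S : X -> Prop) : Prop := exists x, S x.

Definition buffering (Gamma : path -> Prop) (delta eps L : R) (n : nat)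
    (Y A : nat -> X -> Prop) (pi : nat -> X -> X) : Prop :=
  (forall i, (i <= n)%nat -> nonempty (Y i)) /\
  (forall i, (1 <= i <= n)%nat -> nonempty (A i)) /\
  forall i, (1 <= i <= n)%nat ->
    constricting Gamma (A i) (pi i) delta /\
    ((i <> n) -> Rbar_le (diam_proj (pi i) (A (S i))) eps /\
                 Rbar_le (diam_proj (pi (S i)) (A i)) eps) /\
    (Rbar_le (diam_proj (pi i) (Y (i - 1)%nat)) eps /\
     Rbar_le (diam_proj (pi i) (Y i)) eps) /\
    (Rbar_le (set_dist (A i) (Y (i - 1)%nat)) eps /\
     Rbar_le (set_dist (A i) (Y i)) eps) /\
    Rbar_le L (dproj (pi i) (Y (i - 1)%nat) (Y i)).
End Defs.

(* A delta-constricting map pi_A is coarsely Lipschitz: points at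
   distance r have projections at distance at most 2 delta + |mu| r + |nu|.
   From this and the quasi-geodesic property of paths in Gamma we derive the
   Behrstock inequality: if pi_A x is far from pi_A (pi_B x), then pi_B x is
   uniformly close to pi_B (pi_A x).  Along a buffering sequence this gives
   the key step: if pi_{A_j} y0 is far from pi_{A_j}(Y_j), then pi_{A_{j+1}} y0
   is uniformly close to pi_{A_{j+1}}(Y_j), hence (by BS4, which puts Y_j and
   Y_{j+1} at A_{j+1}-distance at least L) far from pi_{A_{j+1}}(Y_{j+1}).
   Induction on j shows d_{A_j}(y0, Y_j) >= L - K for a constant K depending
   only on mu, nu, delta, eps, and choosing L = K + (const) + theta + 1 proves
   the theorem. *)

From Stdlib Require Import Reals Lra Lia Classical.
From Coquelicot Require Import Coquelicot.
Open Scope R_scope.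

Lemma glb_lower_elem (E : R -> Prop) (m r : R) :
  Rbar_le m (Glb_Rbar E) -> E r -> m <= r.
Proof.
  intros Hm Er. destruct (Glb_Rbar_correct E) as [Hlb _].
  exact (Rbar_le_trans _ _ _ Hm (Hlb r Er)).
Qed.

Lemma glb_greatest (E : R -> Prop) (m : R) :
  (forall r, E r -> m <= r) -> Rbar_le m (Glb_Rbar E).
Proof.
  intros Hm. destruct (Glb_Rbar_correct E) as [_ Hg]. apply Hg.
  intros r Er. exact (Hm r Er).
Qed.

Lemma glb_approx (E : R -> Prop) (e : R) :
  Rbar_le (Glb_Rbar E) e -> exists r, E r /\ r <= e + 1.
Proof.
  intros He. apply NNPP. intros Hno.
  assert (Hlow : Rbar_le (e + 1) (Glb_Rbar E)).
  { apply glb_greatest. intros r Er.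
    destruct (Rle_lt_dec r (e + 1)) as [Hr | Hr]; [exfalso; eauto | lra]. }
  pose proof (Rbar_le_trans _ _ _ Hlow He) as Habs. simpl in Habs. lra.
Qed.

Lemma lub_upper_elem (E : R -> Prop) (e r : R) :
  Rbar_le (Lub_Rbar E) e -> E r -> r <= e.
Proof.
  intros He Er. destruct (Lub_Rbar_correct E) as [Hub _].
  exact (Rbar_le_trans _ _ _ (Hub r Er) He).
Qed.

Section PathSystem.
Variable X : Type.
Variable d : X -> X -> R.
Variable Gamma : path X -> Prop.
Variables mu nu : R.
Hypothesis HP : path_system_space X d Gamma mu nu.

Lemma d_nonneg x y : 0 <= d x y.
Proof. destruct HP as [[[H _] _] _]. apply H. Qed.

Lemma d_sym x y : d x y = d y x.
Proof. destruct HP as [[[_ [_ [H _]]] _] _]. apply H. Qed.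

Lemma d_triangle x y z : d x z <= d x y + d y z.
Proof. destruct HP as [[[_ [_ [_ H]]] _] _]. apply H. Qed.

Lemma dproj_lower (pi : X -> X) (Y Z : X -> Prop) (m : R) y z :
  Rbar_le m (dproj X d pi Y Z) -> Y y -> Z z -> m <= d (pi y) (pi z).
Proof.
  intros Hm Yy Zz. apply (glb_lower_elem _ _ _ Hm).
  exists (pi y), (pi z). repeat split; eauto.
Qed.

Lemma dproj_greatest (pi : X -> X) (Y Z : X -> Prop) (m : R) :
  (forall y z, Y y -> Z z -> m <= d (pi y) (pi z)) ->
  Rbar_le m (dproj X d pi Y Z).
Proof.
  intros Hm. apply glb_greatest.
  intros r [a [b [[y [Yy ->]] [[z [Zz ->]] ->]]]]. auto.
Qed.

Lemma quasi_geodesic_tail (g : path X) (t s : R) :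
  Gamma g -> pa X g <= t <= s -> s <= pb X g ->
  d (pf X g s) (pf X g (pb X g)) <=
    Rabs mu * d (pf X g t) (pf X g (pb X g)) + Rabs nu.
Proof.
  intros Gg Hts Hs. destruct HP as [_ [_ [_ [_ Hq]]]].
  pose proof (pab X g) as Hab.
  destruct (Hq g Gg s (pb X g)) as [Hs_le _]; try lra.
  destruct (Hq g Gg t (pb X g)) as [_ Ht_ge]; try lra.
  assert (Rabs (s - pb X g) <= Rabs (t - pb X g)).
  { unfold Rabs; repeat destruct Rcase_abs; lra. }
  pose proof (Rmult_le_compat_r _ _ _ (d_nonneg (pf X g t) (pf X g (pb X g)))
                (Rle_abs mu)).
  pose proof (Rle_abs nu). lra.
Qed.

Lemma initial_subpath (g : path X) (t : R) :
  Gamma g -> pa X g <= t <= pb X g ->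
  exists g', Gamma g' /\ joins X g' (pf X g (pa X g)) (pf X g t) /\
    forall u, pa X g' <= u <= pb X g' ->
      exists s, pa X g <= s <= t /\ pf X g' u = pf X g s.
Proof.
  intros Gg Ht. destruct HP as [_ [_ [Hsub _]]].
  destruct (Hsub g Gg (pa X g) t) as [g' [c [Gg' [Ea [Eb Ef]]]]]; try lra.
  exists g'. split; [exact Gg' |]. split.
  - split; [rewrite Ea, Ef | rewrite Eb, Ef]; auto; lra.
  - intros u Hu. exists (u - c). rewrite Ea, Eb in Hu. split; [lra |].
    replace u with ((u - c) + c) at 1 by ring. apply Ef. lra.
Qed.

Variable delta : R.

Definition lip_const (r : R) : R := 2 * delta + Rabs mu * r + Rabs nu.

Lemma lip_const_nonneg (r : R) : 0 <= delta -> 0 <= r -> 0 <= lip_const r.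
Proof.
  intros Hd Hr. unfold lip_const.
  pose proof (Rmult_le_pos _ _ (Rabs_pos mu) Hr). pose proof (Rabs_pos nu). lra.
Qed.

(* Constricting maps are coarsely Lipschitz: if the projections are far
   apart, a path of Gamma between the points passes near both of them. *)
Lemma constricting_coarse_lipschitz (A : X -> Prop) (pi : X -> X) x y (r : R) :
  constricting X d Gamma A pi delta -> d x y <= r ->
  d (pi x) (pi y) <= lip_const r.
Proof.
  intros [_ [_ HCS2]] Hr.
  pose proof (d_nonneg x y).
  destruct (Rle_or_lt (d (pi x) (pi y)) delta) as [Hnear | Hfar].
  { pose proof (d_nonneg (pi x) (pi y)). unfold lip_const in *.
    pose proof (Rmult_le_pos _ _ (Rabs_pos mu) (Rle_trans _ _ _ (d_nonneg x y) Hr)).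
    pose proof (Rabs_pos nu). lra. }
  destruct HP as [_ [_ [_ [Hjoin Hq]]]].
  destruct (Hjoin x y) as [g [Gg [Jx Jy]]].
  destruct (HCS2 x y g Gg (conj Jx Jy) Hfar) as [[t1 [I1 D1]] [t2 [I2 D2]]].
  pose proof (pab X g).
  destruct (Hq g Gg t1 t2 I1 I2) as [Q12 _].
  destruct (Hq g Gg (pa X g) (pb X g)) as [_ Qab]; try lra.
  rewrite Jx, Jy in Qab.
  assert (Rabs (t1 - t2) <= Rabs (pa X g - pb X g)).
  { unfold Rabs; repeat destruct Rcase_abs; lra. }
  assert (mu * d x y <= Rabs mu * r).
  { apply Rle_trans with (Rabs mu * d x y).
    - apply Rmult_le_compat_r; [apply d_nonneg | apply Rle_abs].
    - apply Rmult_le_compat_l; [apply Rabs_pos | exact Hr]. }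
  pose proof (d_triangle (pi x) (pf X g t1) (pi y)).
  pose proof (d_triangle (pf X g t1) (pf X g t2) (pi y)).
  rewrite (d_sym (pf X g t1)) in D1. pose proof (Rle_abs nu).
  unfold lip_const. lra.
Qed.

(* Any point q of a Gamma-path from x to pi_B x projects to B near pi_B x:
   the initial subpath from x to q meets the delta-ball around pi_B x, so q
   itself is close to pi_B x by the quasi-geodesic property. *)
Lemma projection_of_path_to_projection (B : X -> Prop) (piB : X -> X) x
    (g : path X) (t : R) :
  constricting X d Gamma B piB delta -> Gamma g -> joins X g x (piB x) ->
  pa X g <= t <= pb X g ->
  d (piB x) (piB (pf X g t)) <= lip_const (Rabs mu * delta + Rabs nu) + delta.
Proof.
  intros CB Gg [Jx Jy] Ht. pose proof CB as [B_in [B_cs1 B_cs2]].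
  destruct (Rle_or_lt (d (piB x) (piB (pf X g t))) delta) as [Hnear | Hfar].
  { assert (Hd : 0 <= delta) by (pose proof (d_nonneg (piB x) (piB (pf X g t))); lra).
    pose proof (lip_const_nonneg (Rabs mu * delta + Rabs nu)).
    pose proof (Rmult_le_pos _ _ (Rabs_pos mu) Hd). pose proof (Rabs_pos nu).
    lra. }
  destruct (initial_subpath g t Gg Ht) as [g' [Gg' [Jg' Hg']]].
  rewrite Jx in Jg'.
  destruct (B_cs2 x (pf X g t) g' Gg' Jg' Hfar) as [[u [Iu Du]] _].
  destruct (Hg' u Iu) as [s [Is Es]]. rewrite Es in Du.
  pose proof (quasi_geodesic_tail g s t Gg ltac:(lra) ltac:(lra)) as Htail.
  rewrite Jy in Htail.
  assert (Hq_near : d (pf X g t) (piB x) <= Rabs mu * delta + Rabs nu).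
  { pose proof (Rmult_le_compat_l _ _ _ (Rabs_pos mu) Du). lra. }
  pose proof (constricting_coarse_lipschitz B piB _ _ _ CB Hq_near) as Hlip.
  pose proof (B_cs1 (piB x) (B_in x)) as Hidem.
  pose proof (d_triangle (piB x) (piB (piB x)) (piB (pf X g t))).
  rewrite (d_sym (piB (pf X g t))) in Hlip. lra.
Qed.

Definition behrstock_const : R :=
  lip_const (Rabs mu * delta + Rabs nu) + delta + lip_const delta.

(* A Gamma-path from x to pi_B x passes
   within delta of pi_A x; project that point to B. *)
Lemma behrstock_inequality (A B : X -> Prop) (piA piB : X -> X) x :
  constricting X d Gamma A piA delta -> constricting X d Gamma B piB delta ->
  d (piA x) (piA (piB x)) > delta ->
  d (piB x) (piB (piA x)) <= behrstock_const.
Proof.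
  intros CA CB Hfar. pose proof CA as [_ [_ A_cs2]].
  destruct HP as [_ [_ [_ [Hjoin _]]]].
  destruct (Hjoin x (piB x)) as [g [Gg Jg]].
  destruct (A_cs2 x (piB x) g Gg Jg Hfar) as [[t [It Dt]] _].
  pose proof (projection_of_path_to_projection B piB x g t CB Gg Jg It).
  pose proof (constricting_coarse_lipschitz B piB _ _ _ CB Dt).
  pose proof (d_triangle (piB x) (piB (pf X g t)) (piB (piA x))).
  unfold behrstock_const. lra.
Qed.

Variable eps : R.

Definition transfer_const : R := eps + lip_const (eps + 1).

Lemma projection_transfer (A B Y : X -> Prop) (piA : X -> X) p :
  constricting X d Gamma A piA delta ->
  Rbar_le (diam_proj X d piA B) eps -> Rbar_le (set_dist X d B Y) eps -> B p ->
  exists w, Y w /\ d (piA p) (piA w) <= transfer_const.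
Proof.
  intros CA Hdiam Hdist Bp.
  destruct (glb_approx _ _ Hdist) as [r [[b [w [Bb [Yw ->]]]] Hbw]].
  exists w. split; [exact Yw |].
  assert (d (piA p) (piA b) <= eps).
  { apply (lub_upper_elem _ _ _ Hdiam). exists p, b. auto. }
  pose proof (constricting_coarse_lipschitz A piA _ _ _ CA Hbw).
  pose proof (d_triangle (piA p) (piA b) (piA w)).
  unfold transfer_const. lra.
Qed.

Definition close_const : R := behrstock_const + transfer_const + eps.

Lemma close_const_nonneg : 0 <= delta -> 0 <= eps -> 0 <= close_const.
Proof.
  intros Hd He. unfold close_const, transfer_const, behrstock_const.
  pose proof (Rmult_le_pos _ _ (Rabs_pos mu) Hd). pose proof (Rabs_pos nu).
  pose proof (lip_const_nonneg (Rabs mu * delta + Rabs nu)).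
  pose proof (lip_const_nonneg delta). pose proof (lip_const_nonneg (eps + 1)).
  lra.
Qed.

Lemma far_then_close (A B Y : X -> Prop) (piA piB : X -> X) y0 :
  constricting X d Gamma A piA delta -> constricting X d Gamma B piB delta ->
  Rbar_le (diam_proj X d piA B) eps -> Rbar_le (diam_proj X d piB A) eps ->
  Rbar_le (set_dist X d B Y) eps -> Rbar_le (set_dist X d A Y) eps ->
  Rbar_le (diam_proj X d piB Y) eps ->
  (forall w, Y w -> transfer_const + delta < d (piA y0) (piA w)) ->
  forall y, Y y -> d (piB y0) (piB y) <= close_const.
Proof.
  intros CA CB DAB DBA SBY SAY DBY Hfar y Yy.
  pose proof CA as [A_in _]. pose proof CB as [B_in _].
  destruct (projection_transfer A B Y piA (piB y0) CA DAB SBY (B_in y0))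
    as [w [Yw Hw]].
  pose proof (Hfar w Yw).
  pose proof (d_triangle (piA y0) (piA (piB y0)) (piA w)).
  pose proof (behrstock_inequality A B piA piB y0 CA CB ltac:(lra)).
  destruct (projection_transfer B A Y piB (piA y0) CB DBA SAY (A_in y0))
    as [w' [Yw' Hw']].
  assert (d (piB w') (piB y) <= eps).
  { apply (lub_upper_elem _ _ _ DBY). exists w', y. auto. }
  pose proof (d_triangle (piB y0) (piB (piA y0)) (piB y)).
  pose proof (d_triangle (piB (piA y0)) (piB w') (piB y)).
  unfold close_const. lra.
Qed.

Lemma buffering_far_from_start (L : R) (n : nat) (Y A : nat -> X -> Prop)
    (pi : nat -> X -> X) :
  0 <= delta -> 0 <= eps -> close_const + transfer_const + delta < L ->
  buffering X d Gamma delta eps L n Y A pi ->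
  forall j, (1 <= j <= n)%nat -> forall y0 z, Y O y0 -> Y j z ->
    L - close_const <= d (pi j y0) (pi j z).
Proof.
  intros Hd He HL [HY [_ HB]] j.
  pose proof (close_const_nonneg Hd He).
  induction j as [| j IH]; intros Hj y0 z Y0 Yz; [lia |].
  destruct (Nat.eq_dec j 0) as [-> | Hj0].
  { destruct (HB 1%nat ltac:(lia)) as [_ [_ [_ [_ BS4]]]].
    pose proof (dproj_lower _ _ _ _ y0 z BS4 Y0 Yz). lra. }
  destruct (HB j ltac:(lia)) as [Cj [BS1 [_ [[_ SAY] _]]]].
  destruct (HB (S j) ltac:(lia)) as [CSj [_ [[DBY _] [[SBY _] BS4]]]].
  destruct (BS1 ltac:(lia)) as [DAB DBA].
  replace (S j - 1)%nat with j in DBY, SBY, BS4 by lia.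
  assert (Hclose : forall y, Y j y -> d (pi (S j) y0) (pi (S j) y) <= close_const).
  { apply (far_then_close (A j) (A (S j)) (Y j) (pi j) (pi (S j))); auto.
    intros w Yw. pose proof (IH ltac:(lia) y0 w Y0 Yw). lra. }
  destruct (HY j ltac:(lia)) as [y Yy].
  pose proof (Hclose y Yy).
  pose proof (dproj_lower _ _ _ _ y z BS4 Yy Yz).
  pose proof (d_triangle (pi (S j) y) (pi (S j) y0) (pi (S j) z)).
  rewrite (d_sym (pi (S j) y) (pi (S j) y0)) in *. lra.
Qed.

End PathSystem.

Theorem mainTheorem9 (X : Type) (d : X -> X -> R) (Gamma : path X -> Prop) (mu nu : R) :
  path_system_space X d Gamma mu nu ->
  forall delta eps theta : R, 0 <= delta -> 0 <= eps -> 0 <= theta ->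
  exists L : R, 0 <= L /\
    forall (n : nat) (Y A : nat -> X -> Prop) (pi : nat -> X -> X),
      buffering X d Gamma delta eps L n Y A pi ->
      forall i : nat, (1 <= i <= n)%nat ->
        Rbar_lt theta (dproj X d (pi i) (Y O) (Y i)).
Proof.
  intros HP delta eps theta Hd He Ht.
  set (K := close_const mu nu delta eps).
  set (T := transfer_const mu nu delta eps).
  assert (HK : 0 <= K) by exact (close_const_nonneg mu nu delta eps Hd He).
  assert (HT : 0 <= T) by (unfold T, transfer_const;
    pose proof (lip_const_nonneg mu nu delta (eps + 1) Hd ltac:(lra)); lra).
  exists (K + T + delta + theta + 1). split; [lra |].
  intros n Y A pi Hbuf i Hi.
  apply Rbar_lt_le_trans with (K + T + delta + theta + 1 - K); [simpl; lra |].
  apply dproj_greatest. intros y0 z Y0 Yz.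
  apply (buffering_far_from_start X d Gamma mu nu HP delta eps _ n Y A pi);
    auto; unfold K, T in *; lra.
Qed.
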